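(* Let $\Sigma$ be a set of events and $E \subseteq \Sigma$. For all sets $S_1, S_2$ of trace sets over $\Sigma$, $$\Big(\bigcup S_1\Big) \parallel_E \Big(\bigcup S_2\Big) \;=\; \bigcup_{T_1 \in S_1,\ T_2 \in S_2} T_1 \parallel_E T_2 .$$
   Context: A trace is a finite (possibly empty) sequence of events from $\Sigma$; $\Sigma^*$ is the set of traces, $\varepsilon$ the empty trace, and $st$ the concatenation of $s$ and $t$. A trace set is a prefix-closed subset of $\Sigma^*$ (the empty set is allowed). For a trace set $T$ and $e \in \Sigma$ define $eT := \{\varepsilon\} \cup \{et \mid t \in T\}$ and $T(e) := \{t \mid et \in T\}$. For $E \subseteq \Sigma$, the binary operation $\parallel_E$ on trace sets is the unique function satisfying: $\varnothing \parallel_E T = T \parallel_E \varnothing = \varnothing$ for every trace set $T$, and, for nonempty trace sets $T_1, T_2$, $$T_1 \parallel_E T_2 = \bigcup_{e \in E} e\big(T_1(e) \parallel_E T_2(e)\big) \cup \bigcup_{e \in \Sigma \setminus E}\Big( e\big(T_1(e) \parallel_E T_2\big) \cup e\big(T_1 \parallel_E T_2(e)\big)\Big).$$ *)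

From Stdlib Require Import List.
Import ListNotations.

Definition trace (Sigma : Type) := list Sigma.
Definition tset (Sigma : Type) := trace Sigma -> Prop.

Definition prefix_closed {Sigma : Type} (T : tset Sigma) : Prop :=
  forall s t : trace Sigma, T (s ++ t) -> T s.

Definition is_trace_set {Sigma : Type} (T : tset Sigma) : Prop := prefix_closed T.

Definition after {Sigma : Type} (T : tset Sigma) (e : Sigma) : tset Sigma :=
  fun t => T (e :: t).

Definition nonempty {Sigma : Type} (T : tset Sigma) : Prop := exists t, T t.

(* This is the unique solution of the defining equations:
   - if T1 or T2 is empty, the result is empty;
   - otherwise eps is in the result (every e(...) contains eps), and
     e t is in the result iff
       e \in E   and t \in T1(e) ||_E T2(e), or
       e \notin E and (t \in T1(e) ||_E T2  or  t \in T1 ||_E T2(e)). *)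
Fixpoint par_mem {Sigma : Type} (E : Sigma -> Prop) (t : trace Sigma)
    (T1 T2 : tset Sigma) {struct t} : Prop :=
  nonempty T1 /\ nonempty T2 /\
  match t with
  | [] => True
  | e :: t' =>
      (E e /\ par_mem E t' (after T1 e) (after T2 e)) \/
      (~ E e /\ (par_mem E t' (after T1 e) T2 \/ par_mem E t' T1 (after T2 e)))
  end.

Definition par {Sigma : Type} (E : Sigma -> Prop) (T1 T2 : tset Sigma) : tset Sigma :=
  fun t => par_mem E t T1 T2.

Definition bigU {Sigma : Type} (S : tset Sigma -> Prop) : tset Sigma :=
  fun t => exists T, S T /\ T t.

(* The inclusion from right to left is monotonicity of the composition.
   For the other one, induct on the trace, generalising over both families:
   the derivative (⋃S)(e) is the union of the derivatives T(e), T ∈ S, so a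
   witness pair for t in a composition of derivatives is the derivative of a
   pair T1 ∈ S1, T2 ∈ S2, and that pair witnesses e t. *)
From Stdlib Require Import List.

Section ParallelComposition.

Variables (Sigma : Type) (E : Sigma -> Prop).

Lemma par_mem_nonempty (t : trace Sigma) (T1 T2 : tset Sigma) :
  par_mem E t T1 T2 -> nonempty T1 /\ nonempty T2.
Proof. destruct t; simpl; tauto. Qed.

Lemma nonempty_after (T : tset Sigma) (e : Sigma) :
  nonempty (after T e) -> nonempty T.
Proof. intros [s Hs]; exists (e :: s); exact Hs. Qed.

Lemma nonempty_mono (T U : tset Sigma) :
  (forall s, T s -> U s) -> nonempty T -> nonempty U.
Proof. intros HTU [s Hs]; exists s; auto. Qed.

Lemma par_mem_mono (t : trace Sigma) (T1 T2 U1 U2 : tset Sigma) :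
  (forall s, T1 s -> U1 s) -> (forall s, T2 s -> U2 s) ->
  par_mem E t T1 T2 -> par_mem E t U1 U2.
Proof.
  revert T1 T2 U1 U2.
  induction t as [|e t IH]; intros T1 T2 U1 U2 H1 H2 (n1 & n2 & Ht); simpl.
  - split; [|split]; auto; eapply nonempty_mono; eauto.
  - split; [eapply nonempty_mono; eauto|].
    split; [eapply nonempty_mono; eauto|].
    destruct Ht as [[HE Ht] | [HE [Ht | Ht]]].
    + left; split; [exact HE|]. eapply IH; [| | exact Ht]; unfold after; auto.
    + right; split; [exact HE|]. left. eapply IH; [| | exact Ht]; unfold after; auto.
    + right; split; [exact HE|]. right. eapply IH; [| | exact Ht]; unfold after; auto.
Qed.

Definition after_image (S : tset Sigma -> Prop) (e : Sigma) : tset Sigma -> Prop :=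
  fun U => exists T, S T /\ U = after T e.

Lemma after_bigU (S : tset Sigma -> Prop) (e : Sigma) (s : trace Sigma) :
  after (bigU S) e s -> bigU (after_image S e) s.
Proof. intros (T & HT & Hs). exists (after T e). split; [exists T; auto | exact Hs]. Qed.

Lemma par_mem_bigU_split (t : trace Sigma) (S1 S2 : tset Sigma -> Prop) :
  par_mem E t (bigU S1) (bigU S2) ->
  exists T1 T2, S1 T1 /\ S2 T2 /\ par_mem E t T1 T2.
Proof.
  revert S1 S2; induction t as [|e t IH]; intros S1 S2 Ht.
  - destruct Ht as ((a & T1 & HT1 & Ha) & (b & T2 & HT2 & Hb) & _).
    exists T1, T2; repeat split; auto; [exists a | exists b]; auto.
  - destruct Ht as (_ & _ & [[HE Ht] | [HE [Ht | Ht]]]).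
    + apply (par_mem_mono _ _ _ (bigU (after_image S1 e)) (bigU (after_image S2 e)))
        in Ht; try apply after_bigU.
      destruct (IH _ _ Ht) as (U1 & U2 & (T1 & HT1 & ->) & (T2 & HT2 & ->) & Ht').
      destruct (par_mem_nonempty _ _ _ Ht') as [n1 n2].
      exists T1, T2; repeat split; eauto using nonempty_after.
    + apply (par_mem_mono _ _ _ (bigU (after_image S1 e)) (bigU S2)) in Ht;
        [| apply after_bigU | auto].
      destruct (IH _ _ Ht) as (U1 & T2 & (T1 & HT1 & ->) & HT2 & Ht').
      destruct (par_mem_nonempty _ _ _ Ht') as [n1 n2].
      exists T1, T2; repeat split; eauto using nonempty_after.
    + apply (par_mem_mono _ _ _ (bigU S1) (bigU (after_image S2 e))) in Ht;
        [| auto | apply after_bigU].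
      destruct (IH _ _ Ht) as (T1 & U2 & HT1 & (T2 & HT2 & ->) & Ht').
      destruct (par_mem_nonempty _ _ _ Ht') as [n1 n2].
      exists T1, T2; repeat split; eauto using nonempty_after.
Qed.

End ParallelComposition.

Theorem lemma1 (Sigma : Type) (E : Sigma -> Prop)
    (S1 S2 : tset Sigma -> Prop)
    (HS1 : forall T, S1 T -> is_trace_set T)
    (HS2 : forall T, S2 T -> is_trace_set T) :
  forall t : trace Sigma,
    par E (bigU S1) (bigU S2) t <->
    (exists T1 T2, S1 T1 /\ S2 T2 /\ par E T1 T2 t).
Proof.
  intros t; split.
  - apply par_mem_bigU_split.
  - intros (T1 & T2 & HT1 & HT2 & Ht).
    apply (par_mem_mono _ _ _ T1 T2); auto; intros s Hs; [exists T1 | exists T2]; auto.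
Qed.
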